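(* Suppose $\widehat{\mathcal L}^{Y\text{-}A\text{-}B}$-uniform-monotonicity holds for the SCC $F$. Then (a) for all $(j,\theta')\in\mathcal I\times\Theta$, if $Z^*$ is a $j$-$Z^*$-$\theta'$-max set then $Z^*\subseteq F(\theta')$; and (b) for all $(j,\theta,\theta')\in\mathcal I\times\Theta\times\Theta$, if $\widehat\Gamma_j^{A\text{-}B}(\theta)$ is a $j$-$Z^*$-$\theta'$-max set then $\widehat\Gamma_j^{A\text{-}B}(\theta)\subseteq F(\theta')$, where $\widehat\Gamma_j^{A\text{-}B}(\theta)=\bigcup_{y\in\widehat{\mathcal L}_j^{Y\text{-}A\text{-}B}(\mathrm{UNIF}[F(\theta)],\theta)}\mathrm{SUPP}[y]$.
   Context: Standing setup: $\mathcal I=\{1,\dots,I\}$ finite, $I\ge 3$; $\Theta$ finite or countably infinite; $Z$ finite; $Y=\Delta(Z)$; $F:\Theta\to 2^Z\setminus\{\emptyset\}$; $u_i^\theta:Z\to\mathbb R$, $U_i^\theta(y)=\sum_zy_zu_i^\theta(z)$; $\mathcal L_i^Y(\alpha,\theta)=\{y\in Y:U_i^\theta(\alpha)\ge U_i^\theta(y)\}$, $\mathcal L_i^Z(\alpha,\theta)=\{z\in Z:U_i^\theta(\alpha)\ge u_i^\theta(z)\}$, $\mathcal L_i^Z(E,\theta)=\bigcap_{z\in E}\mathcal L_i^Z(z,\theta)$; UNIF$(E)$ is the uniform lottery on $E$. A nonempty $E\subseteq Z$ is an $i$-max set if for some $\theta$, $E\subseteq\arg\max_{z\in E}u_i^\theta(z)$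 and $E\subseteq\arg\max_{z\in Z}u_j^\theta(z)$ for all $j\ne i$. $Z^*=\bigcup_\theta F(\theta)$ if $Z$ is an $i$-max set for some $i$, else $Z^*=Z$. A nonempty $E\subseteq Z^*$ is an $i$-$Z^*$-$\theta$-max set if $E\subseteq\arg\max_{z\in E}u_i^\theta(z)$ and $E\subseteq\arg\max_{z\in Z^*}u_j^\theta(z)$ for all $j\ne i$; $\Lambda^i(E)=\{\theta:E\text{ is an }i\text{-}Z^*\text{-}\theta\text{-max set}\}$ ($=\emptyset$ for $E=\emptyset$); $E$ is an $i$-$Z^*$-max set if $\Lambda^i(E)\ne\emptyset$. $\Theta_i^\theta=\{\theta':F(\theta)\text{ is an }i\text{-}Z^*\text{-}\theta'\text{-max set and }F(\theta)\subseteq F(\theta')\}$; $\Xi_i(\theta)=\{K\subseteq\Theta_i^\theta,K\ne\emptyset:\Theta_i^\theta\cap\Lambda^i(Z^*\cap\mathcal L_i^Z(F(\theta),\theta)\cap\bigcap_{\theta'\in K}F(\theta'))=K\}$. $\widehat{\mathcal L}_i^{Y\text{-}A\text{-}B}(\mathrm{UNIF}[F(\theta)],\theta)=\Delta[Z^*\cap\mathcal L_i^Z(F(\theta),\theta)\cap\bigcup_{K\in\Xi_i(\theta)}\bigcap_{\theta'\in K}F(\theta')]$ if $F(\theta)\subseteq\arg\min_{z\in Z^*}u_i^\theta(z)$, $\Xi_i(\theta)\ne\emptyset$ and $Z^*\cap\mathcal L_i^Z(F(\theta),\theta)$ is an $i$-$Z^*$-max set; otherwise $\Delta(Z^* )\cap\mathcal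 L_i^Y(\mathrm{UNIF}[F(\theta)],\theta)$. $\widehat{\mathcal L}^{Y\text{-}A\text{-}B}$-uniform-monotonicity: for all $\theta,\theta'$, [$\widehat{\mathcal L}_i^{Y\text{-}A\text{-}B}(\mathrm{UNIF}[F(\theta)],\theta)\subseteq\mathcal L_i^Y(\mathrm{UNIF}[F(\theta)],\theta')$ for all $i$] implies $F(\theta)\subseteq F(\theta')$. *)

(* Utilities take values in an arbitrary real field R
   (covers the paper's R = reals). Sets of outcomes / lotteries / states
   are Prop-valued predicates, since Theta may be countably infinite. *)
From HB Require Import structures.
From mathcomp Require Import all_boot all_order all_algebra.
Set Implicit Arguments. Unset Strict Implicit. Unset Printing Implicit Defensive.
Import Order.TTheory GRing.Theory Num.Theory.
Local Open Scope ring_scope.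

Section Defs.
Variables (R : realFieldType) (Z : finType) (Theta : Type) (n : nat).
Variable u : 'I_n -> Theta -> Z -> R.
Variable F : Theta -> {set Z}.

Definition psubset {T : Type} (A B : T -> Prop) := forall x, A x -> B x.
Definition pnonempty {T : Type} (A : T -> Prop) := exists x, A x.
Definition pinter {T : Type} (A B : T -> Prop) : T -> Prop := fun x => A x /\ B x.

Definition is_lottery (y : Z -> R) : Prop :=
  (forall z, 0 <= y z) /\ \sum_(z : Z) y z = 1.
Definition SUPP (y : Z -> R) : Z -> Prop := fun z => 0 < y z.
Definition Delta (E : Z -> Prop) : (Z -> R) -> Prop :=
  fun y => is_lottery y /\ psubset (SUPP y) E.

Definition EU (i : 'I_n) (th : Theta) (y : Z -> R) : R :=
  \sum_(z : Z) y z * u i th z.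

Definition LY (i : 'I_n) (alpha : Z -> R) (th : Theta) : (Z -> R) -> Prop :=
  fun y => is_lottery y /\ EU i th y <= EU i th alpha.
(* L_i^Z(E, th) = cap_{z in E} L_i^Z(z, th), z seen as a degenerate lottery *)
Definition LZset (i : 'I_n) (E : Z -> Prop) (th : Theta) : Z -> Prop :=
  fun z => forall z', E z' -> u i th z <= u i th z'.

Definition UNIF (E : {set Z}) : Z -> R :=
  fun z => if z \in E then (#|E|%:R)^-1 else 0.

Definition argmax (E : Z -> Prop) (f : Z -> R) : Z -> Prop :=
  fun z => E z /\ forall z', E z' -> f z' <= f z.
Definition argmin (E : Z -> Prop) (f : Z -> R) : Z -> Prop :=
  fun z => E z /\ forall z', E z' -> f z <= f z'.

Definition fullZ : Z -> Prop := fun _ => True.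

Definition imax_set (i : 'I_n) (E : Z -> Prop) : Prop :=
  pnonempty E /\ exists th : Theta,
    psubset E (argmax E (u i th)) /\
    forall j : 'I_n, j != i -> psubset E (argmax fullZ (u j th)).

Definition Zstar : Z -> Prop :=
  fun z => ((exists i, imax_set i fullZ) /\ (exists th, z \in F th))
        \/ (~ (exists i, imax_set i fullZ)).

Definition izmax (i : 'I_n) (th : Theta) (E : Z -> Prop) : Prop :=
  pnonempty E /\ psubset E Zstar /\ psubset E (argmax E (u i th)) /\
  forall j : 'I_n, j != i -> psubset E (argmax Zstar (u j th)).

Definition Lambda (i : 'I_n) (E : Z -> Prop) : Theta -> Prop :=
  fun th => izmax i th E.

Definition izmax_set (i : 'I_n) (E : Z -> Prop) : Prop := pnonempty (Lambda i E).

Definition inF (th : Theta) : Z -> Prop := fun z => z \in F th.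

Definition Theta_i (i : 'I_n) (th : Theta) : Theta -> Prop :=
  fun th' => izmax i th' (inF th) /\ psubset (inF th) (inF th').

Definition capF (K : Theta -> Prop) : Z -> Prop :=
  fun z => forall th', K th' -> z \in F th'.

Definition Xi (i : 'I_n) (th : Theta) : (Theta -> Prop) -> Prop :=
  fun K => pnonempty K /\ psubset K (Theta_i i th) /\
    forall th'', (Theta_i i th th'' /\
       Lambda i (pinter (pinter Zstar (LZset i (inF th) th)) (capF K)) th'')
       <-> K th''.

Definition LhatCond (i : 'I_n) (th : Theta) : Prop :=
  psubset (inF th) (argmin Zstar (u i th)) /\ pnonempty (Xi i th) /\
  izmax_set i (pinter Zstar (LZset i (inF th) th)).

Definition LhatYAB (i : 'I_n) (th : Theta) : (Z -> R) -> Prop :=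
  fun y =>
    (LhatCond i th /\
     Delta (pinter (pinter Zstar (LZset i (inF th) th))
                   (fun z => exists K, Xi i th K /\ capF K z)) y)
    \/ (~ LhatCond i th /\
        Delta Zstar y /\ LY i (UNIF (F th)) th y).

Definition Lhat_uniform_monotonic : Prop :=
  forall th th' : Theta,
    (forall i : 'I_n, psubset (LhatYAB i th) (LY i (UNIF (F th)) th')) ->
    F th \subset F th'.

Definition GammaHat (j : 'I_n) (th : Theta) : Z -> Prop :=
  fun z => exists y, LhatYAB j th y /\ SUPP y z.

End Defs.

(* Uniform monotonicity only has to be fed a state θ' for which every
   lottery of the restricted lower contour sets of θ is weakly worse at θ'
   than UNIF[F θ].  This holds as soon as some j-Z*-θ'-max set E contains the
   supports of all lotteries of L̂_j(θ) (hence F θ): at θ' agent j is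
   indifferent on E, and every other agent has E at the top of Z*.  Taking
   E = Z* gives (a), except when Z* = Z, where E would make Z a j-max set.
   For (b), F θ ⊆ F θ' puts θ' in Θ_j^θ; if the A-B condition holds, the
   fixed-point property of each K ∈ Ξ_j(θ) then forces θ' ∈ K.  If it fails,
   either some outcome of Z* is strictly worse than UNIF[F θ] for j, in which
   case mixing makes Γ̂_j(θ) = Z* and (a) applies, or F θ consists of j's
   worst outcomes in Z*, and a decreasing iteration on finite sets builds a
   K ∈ Ξ_j(θ), so that the A-B condition held after all. *)
From HB Require Import structures.
From mathcomp Require Import all_boot all_order all_algebra.
From mathcomp Require Import boolp ring.
Import Order.TTheory GRing.Theory Num.Theory.
Local Open Scope ring_scope.
Set Implicit Arguments. Unset Strict Implicit.

Section Lotteries.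
Variables (R : realFieldType) (Z : finType).
Implicit Types (y : Z -> R) (f : Z -> R).

Lemma lottery_mean_le y f M :
  is_lottery y -> (forall z, SUPP y z -> f z <= M) -> \sum_z y z * f z <= M.
Proof.
move=> [y0 y1] hM; rewrite -[M]mul1r -y1 mulr_suml.
apply: ler_sum => z _; have := y0 z; rewrite le0r => /orP[/eqP ->|yz].
  by rewrite !mul0r.
by apply: ler_wpM2l; [exact: ltW | exact: hM].
Qed.

Lemma lottery_mean_ge y f M :
  is_lottery y -> (forall z, SUPP y z -> M <= f z) -> M <= \sum_z y z * f z.
Proof.
move=> ly hM; rewrite -lerN2 -sumrN.
under eq_bigr do rewrite -mulrN.
by apply: lottery_mean_le => // z /hM; rewrite lerN2.
Qed.

Lemma lottery_eq_mean y f :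
  is_lottery y -> (forall z, SUPP y z -> \sum_x y x * f x <= f z) ->
  forall z, SUPP y z -> f z = \sum_x y x * f x.
Proof.
move=> [y0 y1]; set m := \sum_x _ => hm z yz.
have dev0 : \sum_x y x * (f x - m) = 0.
  under eq_bigr do rewrite mulrBr.
  by rewrite sumrB -mulr_suml y1 mul1r subrr.
have dev_ge0 x : true -> 0 <= y x * (f x - m).
  move=> _; have := y0 x; rewrite le0r => /orP[/eqP ->|yx]; first by rewrite mul0r.
  by apply: mulr_ge0; [exact: ltW | rewrite subr_ge0; exact: hm].
move/eqP: (@psumr_eq0P _ _ _ _ dev_ge0 dev0 z isT); rewrite mulf_eq0 subr_eq0.
by case/orP=> [/eqP y0z|/eqP //]; move: yz; rewrite /SUPP y0z ltxx.
Qed.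

Definition dirac (w : Z) : Z -> R := fun z => (z == w)%:R.

Lemma sum_dirac w f : \sum_z dirac w z * f z = f w.
Proof.
rewrite (bigD1 w) //= /dirac eqxx mul1r big1 ?addr0 // => z /negbTE ->.
by rewrite mul0r.
Qed.

Lemma dirac_lottery w : is_lottery (dirac w).
Proof.
split=> [z|]; first by rewrite /dirac ler0n.
by rewrite -(sum_dirac w (fun _ => 1)); apply: eq_bigr => z _; rewrite mulr1.
Qed.

Lemma SUPP_dirac w z : SUPP (dirac w) z <-> z = w.
Proof.
rewrite /SUPP /dirac; split; last by move=> ->; rewrite eqxx ltr01.
by case: eqP => // _; rewrite ltxx.
Qed.

Lemma UNIF_lottery (E : {set Z}) : E != set0 -> is_lottery (UNIF R E).
Proof.
rewrite -card_gt0 -(ltr0n R) => cardE; split=> [z|].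
  by rewrite /UNIF; case: ifP => // _; rewrite invr_ge0 ltW.
rewrite /UNIF -big_mkcond /= sumr_const -[X in X = 1]mulr_natl mulfV //.
by rewrite gt_eqF.
Qed.

Lemma SUPP_UNIF (E : {set Z}) z : E != set0 -> SUPP (UNIF R E) z <-> z \in E.
Proof.
rewrite -card_gt0 -(ltr0n R) => cardE; rewrite /SUPP /UNIF.
by case: ifP => _; rewrite ?invr_gt0 ?ltxx.
Qed.

(* The weight on [w] is chosen small enough that the mixture's mean stays
   below [c]; it is positive since [f l < c]. *)
Lemma lottery_mix_below f (w l : Z) (c : R) : f l < c ->
  exists y, [/\ is_lottery y, forall z, SUPP y z -> z = w \/ z = l,
                SUPP y w & \sum_z y z * f z <= c].
Proof.
move=> flc; pose d := c - f l; pose D : R := `|f w - f l| + d.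
have d_gt0 : 0 < d by rewrite subr_gt0.
have D_gt0 : 0 < D by rewrite ltr_wpDl.
pose lam := d / D.
have lam_gt0 : 0 < lam by rewrite divr_gt0.
have lam_le1 : lam <= 1 by rewrite ler_pdivrMr // mul1r lerDr.
exists (fun z => lam * dirac w z + (1 - lam) * dirac l z); split.
- split=> [z|].
    by apply: addr_ge0; apply: mulr_ge0; rewrite /dirac ?ler0n ?subr_ge0 // ltW.
  by rewrite big_split /= -!mulr_sumr !(dirac_lottery _).2 !mulr1 addrC subrK.
- move=> z; rewrite /SUPP /dirac; case: (eqVneq z w) => [->|_]; first by left.
  case: (eqVneq z l) => [->|_]; first by right.
  by rewrite !mulr0 addr0 ltxx.
- rewrite /SUPP /dirac eqxx mulr1 ltr_wpDr //.
  by rewrite mulr_ge0 ?subr_ge0 ?ler0n.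
have -> : \sum_z (lam * dirac w z + (1 - lam) * dirac l z) * f z =
          f l + lam * (f w - f l).
  rewrite (_ : f l + _ = lam * f w + (1 - lam) * f l); last by ring.
  rewrite -(sum_dirac w (fun z => lam * f z)).
  rewrite -(sum_dirac l (fun z => (1 - lam) * f z)) -big_split /=.
  by apply: eq_bigr => z _; ring.
rewrite -lerBrDl -/d (le_trans (y := lam * `|f w - f l|)) ?ler_pM2l ?ler_norm //.
by rewrite /lam mulrAC ler_pdivrMr // ler_pM2l // lerDl ltW.
Qed.

End Lotteries.

Definition pred_finset (Z : finType) (S : Z -> Prop) : {set Z} := [set z | `[< S z >]].

Lemma mem_pred_finset (Z : finType) (S : Z -> Prop) z : z \in pred_finset S <-> S z.
Proof. by rewrite inE; split=> /asboolP. Qed.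

Lemma pred_finset_proper (Z : finType) (A B : Z -> Prop) :
  psubset A B -> ~ psubset B A -> (#|pred_finset A| < #|pred_finset B|)%N.
Proof.
move=> AB BA; apply: proper_card; rewrite properE; apply/andP; split.
  by apply/subsetP => z /mem_pred_finset /AB /mem_pred_finset.
apply/negP => /subsetP sBA; apply: BA => z /mem_pred_finset /sBA.
by move/mem_pred_finset.
Qed.

Section Mechanism.
Variables (R : realFieldType) (Z : finType) (Theta : Type) (n : nat).
Variables (u : 'I_n -> Theta -> Z -> R) (F : Theta -> {set Z}).
Hypothesis F_neq0 : forall th, F th != set0.

Local Notation Zs := (Zstar u F).
Local Notation LZF j th := (LZset u j (inF F th) th).
Local Notation B j th := (pinter Zs (LZF j th)).

Lemma inF_Zstar th z : z \in F th -> Zs z.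
Proof.
move=> zF; have [imax|] := pselect (exists i, imax_set u i (@fullZ Z)).
  by left; split; last exists th.
by right.
Qed.

Lemma izmax_sub i th E S :
  izmax u F i th E -> psubset S E -> pnonempty S -> izmax u F i th S.
Proof.
move=> [_ [EZ [Emax Eothers]]] SE S_ne; split=> //; split=> [z /SE /EZ //|].
split=> [z Sz|j ji z /SE]; last exact: Eothers.
by split=> // z' /SE; apply: (Emax z (SE z Sz)).2.
Qed.

Lemma LhatYAB_Delta_Zstar i th y : LhatYAB u F i th y -> Delta Zs y.
Proof.
by case=> [[_ [ly sy]]|[_ [[ly sy] _]]]; split=> // z /sy; first case=> [[]].
Qed.

Lemma UNIF_LhatYAB i th : LhatYAB u F i th (UNIF R (F th)).
Proof.
have lU := UNIF_lottery R (F_neq0 th).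
have sU z : SUPP (UNIF R (F th)) z -> z \in F th by move/(SUPP_UNIF _ _ (F_neq0 th)).
have [cond|ncond] := pselect (LhatCond u F i th); [left|right]; split=> //.
  split=> // z /sU zF; have [Fmin [[K XiK] _]] := cond.
  split; first split.
  - exact: inF_Zstar zF.
  - by move=> z' z'F; apply: (Fmin z zF).2 z' (inF_Zstar z'F).
  - by exists K; split=> // t Kt; apply: (XiK.2.1 t Kt).2.
by split; [split=> // z /sU /inF_Zstar | split].
Qed.

Lemma GammaHat_Zstar j th : psubset (GammaHat u F j th) Zs.
Proof. by move=> z [y [/LhatYAB_Delta_Zstar [_ sy] /sy]]. Qed.

Lemma inF_GammaHat j th : psubset (inF F th) (GammaHat u F j th).
Proof.
move=> z zF; exists (UNIF R (F th)); split; first exact: UNIF_LhatYAB.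
exact/(SUPP_UNIF _ _ (F_neq0 th)).
Qed.

(* At [th'], agent [j] is indifferent on [E] and the others rank [E] on top of
   [Z*], so a point [a] of [F th] separates both sides of each comparison. *)
Lemma LhatYAB_LY_of_izmax j th th' E :
  izmax u F j th' E -> psubset (GammaHat u F j th) E ->
  forall i, psubset (LhatYAB u F i th) (LY u i (UNIF R (F th)) th').
Proof.
move=> [_ [_ [Emax Eothers]]] GE i y Ly; have [ly sy] := LhatYAB_Delta_Zstar Ly.
have lU := UNIF_lottery R (F_neq0 th).
have sU z : SUPP (UNIF R (F th)) z -> z \in F th by move/(SUPP_UNIF _ _ (F_neq0 th)).
have FE z : z \in F th -> E z by move=> zF; apply: GE; apply: inF_GammaHat.
have /set0Pn [a aF] := F_neq0 th; split=> //.
apply: (@le_trans _ _ (u i th' a)); [apply: lottery_mean_le | apply: lottery_mean_ge] => // z.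
  case: (eqVneq i j) => [eij|ij] yz; last exact: (Eothers i ij a (FE a aF)).2 z (sy z yz).
  by rewrite eij; apply: (Emax a (FE a aF)).2; apply: GE; exists y; rewrite -eij.
move/sU => zF; case: (eqVneq i j) => [->|ij].
  exact: (Emax z (FE z zF)).2 a (FE a aF).
exact: (Eothers i ij z (FE z zF)).2 a (inF_Zstar aF).
Qed.

Hypothesis mono : Lhat_uniform_monotonic u F.

Lemma inF_sub_of_izmax j th th' E :
  izmax u F j th' E -> psubset (GammaHat u F j th) E ->
  psubset (inF F th) (inF F th').
Proof.
move=> hE GE z; apply/subsetP: z.
exact: mono (LhatYAB_LY_of_izmax hE GE).
Qed.

Lemma imax_set_fullZ_of_izmax j th' :
  ~ (exists i, imax_set u i (@fullZ Z)) -> izmax u F j th' Zs ->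
  imax_set u j (@fullZ Z).
Proof.
move=> nimax [[z _] [_ [Zmax Zothers]]]; split; first by exists z.
exists th'; split=> [x _|k kj x _]; split=> // z' _.
  exact: (Zmax x (or_intror nimax)).2 z' (or_intror nimax).
exact: (Zothers k kj x (or_intror nimax)).2 z' (or_intror nimax).
Qed.

Lemma Zstar_sub_inF j th' : izmax u F j th' Zs -> psubset Zs (inF F th').
Proof.
move=> hZ z [[_ [th zF]]|nimax]; last first.
  by case: (nimax); exists j; exact: imax_set_fullZ_of_izmax nimax hZ.
exact: inF_sub_of_izmax hZ (@GammaHat_Zstar j th) z zF.
Qed.

Lemma Theta_i_of_izmax_GammaHat j th th' :
  izmax u F j th' (GammaHat u F j th) -> Theta_i u F j th th'.
Proof.
move=> hG; have /set0Pn [a aF] := F_neq0 th; split.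
  by apply: izmax_sub hG (@inF_GammaHat j th) _; exists a.
exact: inF_sub_of_izmax hG (fun z h => h).
Qed.

(* The Dirac lotteries on [B ∩ capF K] lie in [LhatYAB], so this set is max
   at [th'], and the fixed-point property of [K ∈ Xi] puts [th'] in [K]. *)
Lemma GammaHat_sub_of_LhatCond j th th' :
  LhatCond u F j th -> izmax u F j th' (GammaHat u F j th) ->
  psubset (GammaHat u F j th) (inF F th').
Proof.
move=> cond hG z [y [[[_ [_ sy]]|[//]] yz]].
have [_ [K [XiK zK]]] := sy z yz; apply: zK; apply: (XiK.2.2 th').1.
split; first exact: Theta_i_of_izmax_GammaHat.
apply: izmax_sub hG _ _.
  move=> w [Bw Kw]; exists (dirac R w); split; last exact/SUPP_dirac.
  left; split=> //; split; first exact: dirac_lottery.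
  by move=> v /SUPP_dirac ->; split=> //; exists K.
have /set0Pn [a aF] := F_neq0 th; exists a; split; first split.
- exact: inF_Zstar aF.
- by move=> z' z'F; apply: (cond.1 a aF).2 z' (inF_Zstar z'F).
- by move=> t Kt; apply: (XiK.2.1 t Kt).2.
Qed.

Lemma Zstar_sub_GammaHat j th l :
  ~ LhatCond u F j th -> Zs l -> u j th l < EU u j th (UNIF R (F th)) ->
  psubset Zs (GammaHat u F j th).
Proof.
move=> ncond Zl low w Zw; have [y [ly sy yw ymean]] := lottery_mix_below w low.
exists y; split=> //; right; split=> //; split; last by split.
by split=> // z /sy [->|->].
Qed.

Section XiNonempty.
Variables (j : 'I_n) (th th' : Theta).
Hypotheses (FB : psubset (inF F th) (B j th)) (T_th' : Theta_i u F j th th').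
Hypothesis B_max : Lambda u F j (B j th) th'.

Let Kof (S : Z -> Prop) : Theta -> Prop :=
  fun t => Theta_i u F j th t /\ Lambda u F j S t.

(* Iterate [S ↦ B ∩ capF (Kof S)] from [B]; the iterates decrease, contain
   [F th] and stay max at [th'], so they stabilise at a fixed point of [Xi]. *)
Lemma Xi_nonempty_from S :
  psubset S (B j th) -> psubset (inF F th) S -> Lambda u F j S th' ->
  psubset (pinter (B j th) (capF F (Kof S))) S -> pnonempty (Xi u F j th).
Proof.
have /set0Pn [a aF] := F_neq0 th.
elim: {S}#|pred_finset S| {-2}S (leqnn #|pred_finset S|) => [|m IH] S.
  rewrite leqn0 cards_eq0 => /eqP S0 _ /(_ a aF) /mem_pred_finset.
  by rewrite S0 inE.
move=> cardS SB FS S_max S'S; set S' := pinter (B j th) (capF F (Kof S)).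
have FS' : psubset (inF F th) S'.
  by split; [exact: FB | move=> t [[_ tF] _]; apply: tF].
have ne_S' : pnonempty S' by exists a; apply: FS'.
have S'_max t : Lambda u F j S t -> Lambda u F j S' t by move/izmax_sub; apply.
have [SS'|nSS'] := pselect (psubset S S').
  exists (Kof S); split; first by exists th'.
  split=> [t []//|t]; split=> [[Tt St]|[Tt St]]; split=> //.
    by apply: izmax_sub St SS' _; exists a; apply: FS.
  exact: S'_max.
apply: (IH S') => //.
- by rewrite -ltnS (leq_trans (pred_finset_proper S'S nSS')).
- by move=> z [].
- exact: S'_max.
- by move=> z [Bz Kz]; split=> // t [Tt St]; apply: Kz; split=> //; apply: S'_max.
Qed.

Lemma Xi_nonempty : pnonempty (Xi u F j th).
Proof. by apply: (@Xi_nonempty_from (B j th)) => // z []. Qed.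

End XiNonempty.

(* If no outcome of [Z*] is strictly worse for [j] than [UNIF[F th]], then
   [j] is indifferent on [F th] at its minimum over [Z*]. *)
Lemma LhatCond_of_min_mean j th th' :
  (forall l, Zs l -> EU u j th (UNIF R (F th)) <= u j th l) ->
  izmax u F j th' (GammaHat u F j th) -> LhatCond u F j th.
Proof.
move=> minZ hG; have [cond|ncond] := pselect (LhatCond u F j th) => //.
set c := EU u j th (UNIF R (F th)).
have sU z : z \in F th -> SUPP (UNIF R (F th)) z by move/(SUPP_UNIF _ _ (F_neq0 th)).
have Fc b : b \in F th -> u j th b = c.
  move/sU; rewrite /c /EU; apply: lottery_eq_mean (UNIF_lottery R (F_neq0 th)) _ b.
  by move=> z /(SUPP_UNIF _ _ (F_neq0 th)) /inF_Zstar; apply: minZ.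
have /set0Pn [a aF] := F_neq0 th.
have FB : psubset (inF F th) (B j th).
  by move=> b bF; split; [exact: inF_Zstar bF | move=> z' /Fc ->; rewrite (Fc b bF)].
have BG : psubset (B j th) (GammaHat u F j th).
  move=> w [Zw Lw]; exists (dirac R w); split; last exact/SUPP_dirac.
  right; split=> //; split; first by split; [exact: dirac_lottery | move=> v /SUPP_dirac ->].
  split; first exact: dirac_lottery.
  have -> : EU u j th (dirac R w) = u j th w by rewrite /EU sum_dirac.
  by rewrite -/c -(Fc a aF); apply: Lw.
have B_max : Lambda u F j (B j th) th'.
  by apply: izmax_sub hG BG _; exists a; apply: FB.
split; first by move=> b bF; split; [exact: inF_Zstar bF | move=> z' /minZ; rewrite (Fc b bF)].
split; first exact: Xi_nonempty FB (Theta_i_of_izmax_GammaHat hG) B_max.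
by exists th'.
Qed.

Lemma GammaHat_sub_inF j th th' :
  izmax u F j th' (GammaHat u F j th) -> psubset (GammaHat u F j th) (inF F th').
Proof.
move=> hG; have [cond|ncond] := pselect (LhatCond u F j th).
  exact: GammaHat_sub_of_LhatCond.
have [[l [Zl low]]|nlow] :=
  pselect (exists l, Zs l /\ u j th l < EU u j th (UNIF R (F th))).
  have ZG := Zstar_sub_GammaHat ncond Zl low.
  move=> z /GammaHat_Zstar; apply: (@Zstar_sub_inF j).
  by apply: izmax_sub hG ZG _; exists l.
case: ncond; apply: LhatCond_of_min_mean hG => l Zl.
by rewrite leNgt; apply/negP => low; apply: nlow; exists l.
Qed.

End Mechanism.

Unset Implicit Arguments.
Set Strict Implicit.

Theorem lemma9 (R : realFieldType) (Z : finType) (Theta : countType) (n : nat)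
  (u : 'I_n -> Theta -> Z -> R) (F : Theta -> {set Z})
  (hn : (3 <= n)%N) (hF : forall th, F th != set0) :
  Lhat_uniform_monotonic u F ->
  (forall (j : 'I_n) (th' : Theta),
      izmax u F j th' (Zstar u F) -> psubset (Zstar u F) (inF F th')) /\
  (forall (j : 'I_n) (th th' : Theta),
      izmax u F j th' (GammaHat u F j th) ->
      psubset (GammaHat u F j th) (inF F th')).
Proof.
move=> mono; split; [exact: Zstar_sub_inF hF mono | exact: GammaHat_sub_inF hF mono].
Qed.
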